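(* Let $K\ge1$, $T\ge1$, $\ell_1,\dots,\ell_T\in[0,1]^K$, $\phi>1$, $\alpha>0$, and suppose the cumulative loss of FlipFlop with parameters $\phi,\alpha$ satisfies $H^{\mathrm{ff}}_T\ge L^*_T$. Then \[ \underline{V}_T\le\frac{L^*_T(T-L^*_T)}{T}+\Big(\frac{\phi}{\phi-1}+\frac{\phi}{\alpha}+2\Big)\underline{\Delta}_T+\frac{\phi}{\alpha}. \]
   Context: Hedge setting: $K$ experts; in round $t$ the learner chooses a probability vector $w_t$, then $\ell_t$ is revealed and the learner suffers $h_t=\sum_kw_{t,k}\ell_{t,k}$. Write $L_{t,k}=\sum_{s=1}^t\ell_{s,k}$ ($L_{0,k}=0$), $L^*_t=\min_kL_{t,k}$, $H_T=\sum_{t\le T}h_t$. Exponential weights with learning rate $\eta\in(0,\infty]$ at time $t$: $w_{t,k}=e^{-\eta L_{t-1,k}}/\sum_je^{-\eta L_{t-1,j}}$ if $\eta<\infty$; for $\eta=\infty$, $w_t$ uniform on $\{k:L_{t-1,k}=L^*_{t-1}\}$. With learning rate $\eta_t$ in round $t$: mix loss $m_t=-\frac1{\eta_t}\ln\sum_kw_{t,k}e^{-\eta_t\ell_{t,k}}$ if $\eta_t<\infty$, $m_t=L^*_t-L^*_{t-1}$ if $\eta_t=\infty$; mixability gap $\delta_t=h_t-m_t$; loss variance $v_t=\sum_kw_{t,k}(\ell_{t,k}-h_t)^2$. FlipFlop with parameters $\phi>1,\alpha>0$: keeps accumulators $\overline{\Delta}$ (flip) and $\underline{\Delta}$ (flop),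 both initially $0$, starting in the flip regime. In round $t$: flip regime uses $\eta_t=\infty$; flop regime uses $\eta_t=\ln K/\underline{\Delta}_{t-1}$ ($=\infty$ if $\underline{\Delta}_{t-1}=0$); weights are exponential weights with learning rate $\eta_t$ from $L_{t-1}$. After round $t$, $\delta_t$ is added to the current regime's accumulator. If in flip and $\overline{\Delta}_t>(\phi/\alpha)\underline{\Delta}_t$, switch to flop for round $t+1$; if in flop and $\underline{\Delta}_t>\alpha\overline{\Delta}_t$, switch to flip for round $t+1$. $H^{\mathrm{ff}}_T$ is FlipFlop's cumulative loss, $\underline{\Delta}_T$ the sum of $\delta_t$ over flop rounds $t\le T$, and $\underline{V}_T$ the sum of $v_t$ over flop rounds $t\le T$. *)

From Stdlib Require Import Reals Lra List.
Open Scope R_scope.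

(* Experts are indexed 0..K-1; rounds 1..T; l t k = loss of expert k in round t. *)
Definition sumK (K : nat) (f : nat -> R) : R :=
  fold_right (fun k acc => f k + acc) 0 (seq 0 K).

Definition minK (K : nat) (f : nat -> R) : R :=
  fold_right (fun k acc => Rmin (f k) acc) (f 0%nat) (seq 0 K).

Fixpoint cumL (l : nat -> nat -> R) (t k : nat) : R :=
  match t with
  | O => 0
  | S s => cumL l s k + l (S s) k
  end.

Definition Lstar (K : nat) (l : nat -> nat -> R) (t : nat) : R :=
  minK K (cumL l t).

(* Exponential weights with learning rate eta (None = +infinity),
   computed from the cumulative loss vector Lp = L_{t-1}. *)
Definition ew (K : nat) (Lp : nat -> R) (eta : option R) (k : nat) : R :=
  match eta with
  | Some e => exp (- e * Lp k) / sumK K (fun j => exp (- e * Lp j))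
  | None =>
      let ind := fun j => if Req_EM_T (Lp j) (minK K Lp) then 1 else 0 in
      ind k / sumK K ind
  end.

Definition hloss (K : nat) (w lt : nat -> R) : R := sumK K (fun k => w k * lt k).

(* mix loss m_t; Lprev = L*_{t-1}, Lnow = L*_t *)
Definition mixloss (K : nat) (w lt : nat -> R) (eta : option R) (Lprev Lnow : R) : R :=
  match eta with
  | Some e => - (1 / e) * ln (sumK K (fun k => w k * exp (- e * lt k)))
  | None => Lnow - Lprev
  end.

Definition lvar (K : nat) (w lt : nat -> R) (h : R) : R :=
  sumK K (fun k => w k * (lt k - h) ^ 2).

(* FlipFlop state after t rounds:
   inflip = regime used in round t+1; Dflip/Dflop = accumulators;
   Hff = cumulative loss of FlipFlop; Vflop = sum of v over flop rounds. *)
Record ffst := mkst { inflip : bool; Dflip : R; Dflop : R; Hff : R; Vflop : R }.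

Definition ff_eta (K : nat) (st : ffst) : option R :=
  if inflip st then None
  else if Req_EM_T (Dflop st) 0 then None
  else Some (ln (INR K) / Dflop st).

Fixpoint ffstate (K : nat) (phi alpha : R) (l : nat -> nat -> R) (t : nat) : ffst :=
  match t with
  | O => mkst true 0 0 0 0
  | S s =>
      let st := ffstate K phi alpha l s in
      let eta := ff_eta K st in
      let w := ew K (cumL l s) eta in
      let lt := l (S s) in
      let h := hloss K w lt in
      let m := mixloss K w lt eta (Lstar K l s) (Lstar K l (S s)) in
      let d := h - m in
      let v := lvar K w lt h in
      if inflip st then
        let df := Dflip st + d in
        mkst (if Rlt_dec (phi / alpha * Dflop st) df then false else true)
             df (Dflop st) (Hff st + h) (Vflop st)
      else
        let dl := Dflop st + d in
        mkst (if Rlt_dec (alpha * Dflip st) dl then true else false)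
             (Dflip st) dl (Hff st + h) (Vflop st + v)
  end.

From Stdlib Require Import Reals Lra Lia List.
Open Scope R_scope.

(* Only the flop rounds contribute to [Vflop].  Their variances are at most [h (1 - h)], so by
   Cauchy-Schwarz they sum to at most [x (n - x) / n], where [n] counts the flop rounds and [x]
   is FlipFlop's loss on them.  This is turned into [L (T - L) / T], with [L] the best expert's
   loss, once [x] is known to be within [(phi/(phi-1) + 2) Dflop] of the increments of [L] on
   those rounds.
   That regret bound comes from the potential [lse - min] of exponential weights with rate
   [ln K / Dflop], which lies in [[-Dflop, 0]] and moves controllably when [Dflop] grows;
   across flop phases the starting values of [Dflop] grow geometrically with ratio [phi]. *)

Lemma exp_le x y : x <= y -> exp x <= exp y.
Proof. intros [H | ->]; [left; apply exp_increasing; exact H | lra]. Qed.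

Lemma ln_le x y : 0 < x -> x <= y -> ln x <= ln y.
Proof. intros Hx [H | ->]; [left; apply ln_increasing; assumption | lra]. Qed.

Lemma ln_div x y : 0 < x -> 0 < y -> ln (x / y) = ln x - ln y.
Proof.
  intros Hx Hy; unfold Rdiv.
  rewrite ln_mult, ln_Rinv; [ring | assumption | assumption | now apply Rinv_0_lt_compat].
Qed.

Lemma exp_convex s x : 0 <= s <= 1 -> exp (s * x) <= s * exp x + (1 - s).
Proof.
  intros Hs.
  assert (E1 : exp x = exp (s * x) * exp (x - s * x)) by (rewrite <- exp_plus; f_equal; ring).
  assert (E2 : 1 = exp (s * x) * exp (- (s * x))) by (rewrite <- exp_plus, <- exp_0; f_equal; ring).
  pose proof (exp_ineq1_le (x - s * x)). pose proof (exp_ineq1_le (- (s * x))).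
  pose proof (exp_pos (s * x)).
  rewrite E1. replace (1 - s) with ((1 - s) * (exp (s * x) * exp (- (s * x)))) by (rewrite <- E2; ring).
  assert (0 <= exp (s * x) * s * (exp (x - s * x) - (1 + (x - s * x))))
    by (apply Rmult_le_pos; [apply Rmult_le_pos|]; lra).
  assert (0 <= exp (s * x) * (1 - s) * (exp (- (s * x)) - (1 + - (s * x))))
    by (apply Rmult_le_pos; [apply Rmult_le_pos|]; lra).
  nra.
Qed.

Lemma Rabs_le_inv a b : Rabs a <= b -> - b <= a <= b.
Proof. intros H. pose proof (Rle_abs a). pose proof (Rle_abs (- a)). rewrite Rabs_Ropp in *. lra. Qed.

Lemma fold_right_sum_acc (f : nat -> R) l a :
  fold_right (fun k acc => f k + acc) a l = fold_right (fun k acc => f k + acc) 0 l + a.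
Proof. induction l as [|b l IH]; simpl; [lra | rewrite IH; lra]. Qed.

Lemma sumK_0 f : sumK 0 f = 0.
Proof. reflexivity. Qed.

Lemma sumK_S n f : sumK (S n) f = sumK n f + f n.
Proof. unfold sumK. rewrite seq_S, fold_right_app; simpl. rewrite fold_right_sum_acc; lra. Qed.

Lemma sumK_ext n f g : (forall k, (k < n)%nat -> f k = g k) -> sumK n f = sumK n g.
Proof. induction n; intros H; [reflexivity|]. rewrite !sumK_S, IHn, H; auto. Qed.

Lemma sumK_le n f g : (forall k, (k < n)%nat -> f k <= g k) -> sumK n f <= sumK n g.
Proof.
  induction n; intros H; [rewrite !sumK_0; lra|].
  rewrite !sumK_S. assert (f n <= g n) by auto. assert (sumK n f <= sumK n g) by auto. lra.
Qed.

Lemma sumK_plus n f g : sumK n (fun k => f k + g k) = sumK n f + sumK n g.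
Proof. induction n; [rewrite !sumK_0; lra|]. rewrite !sumK_S, IHn; lra. Qed.

Lemma sumK_minus n f g : sumK n (fun k => f k - g k) = sumK n f - sumK n g.
Proof. induction n; [rewrite !sumK_0; lra|]. rewrite !sumK_S, IHn; lra. Qed.

Lemma sumK_scal n c f : sumK n (fun k => c * f k) = c * sumK n f.
Proof. induction n; [rewrite !sumK_0; lra|]. rewrite !sumK_S, IHn; lra. Qed.

Lemma sumK_div n f c : sumK n (fun k => f k / c) = sumK n f / c.
Proof.
  unfold Rdiv. rewrite (sumK_ext n _ (fun k => / c * f k)) by (intros; lra).
  rewrite sumK_scal; lra.
Qed.

Lemma sumK_const n c : sumK n (fun _ => c) = INR n * c.
Proof. induction n; [rewrite sumK_0; simpl; lra|]. rewrite sumK_S, IHn, S_INR; lra. Qed.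

Lemma sumK_ge0 n f : (forall k, (k < n)%nat -> 0 <= f k) -> 0 <= sumK n f.
Proof. intros H. rewrite <- (Rmult_0_r (INR n)), <- sumK_const. apply sumK_le; auto. Qed.

Lemma sumK_ge_term n f j :
  (forall k, (k < n)%nat -> 0 <= f k) -> (j < n)%nat -> f j <= sumK n f.
Proof.
  induction n; intros H Hj; [lia|]. rewrite sumK_S.
  assert (0 <= sumK n f) by (apply sumK_ge0; auto).
  destruct (Nat.eq_dec j n) as [->|]; [lra|].
  assert (f j <= sumK n f) by (apply IHn; auto; lia).
  assert (0 <= f n) by auto. lra.
Qed.

Lemma sumK_telescope n f : sumK n (fun s => f (S s) - f s) = f n - f O.
Proof. induction n; [rewrite sumK_0; lra|]. rewrite sumK_S, IHn; ring. Qed.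

Lemma sumK_cauchy_schwarz n c f : (forall k, (k < n)%nat -> 0 <= c k) ->
  sumK n (fun k => c k * f k) ^ 2 <= sumK n c * sumK n (fun k => c k * f k ^ 2).
Proof.
  induction n; intros Hc; [rewrite !sumK_0; lra|]. rewrite !sumK_S.
  set (X := sumK n (fun k => c k * f k)); set (N := sumK n c);
    set (Q := sumK n (fun k => c k * f k ^ 2)).
  assert (IH : X ^ 2 <= N * Q) by (apply IHn; auto).
  assert (HN : 0 <= N) by (apply sumK_ge0; auto).
  assert (HQ : 0 <= Q) by (apply sumK_ge0; intros k Hk; pose proof (Hc k ltac:(lia)); nra).
  assert (Hcn : 0 <= c n) by auto.
  enough (0 <= N * f n ^ 2 - 2 * f n * X + Q) by nra.
  destruct (Req_dec N 0) as [N0|N0].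
  - assert (X = 0) by (rewrite N0 in IH; nra). subst; nra.
  - assert (0 <= N * (N * f n ^ 2 - 2 * f n * X + Q)).
    { replace (N * (N * f n ^ 2 - 2 * f n * X + Q)) with ((N * f n - X) ^ 2 + (N * Q - X ^ 2))
        by ring.
      pose proof (pow2_ge_0 (N * f n - X)). lra. }
    assert (0 < N) by lra. nra.
Qed.

Lemma minK_le K f k : (k < K)%nat -> minK K f <= f k.
Proof.
  intros Hk. unfold minK.
  assert (H : In k (seq 0 K)) by (apply in_seq; lia). revert H.
  generalize (seq 0 K) as s. induction s as [|a s IH]; simpl; [tauto|].
  intros [->|H]; [apply Rmin_l | eapply Rle_trans; [apply Rmin_r | auto]].
Qed.

Lemma minK_attained K f : (1 <= K)%nat -> exists k, (k < K)%nat /\ minK K f = f k.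
Proof.
  intros HK. unfold minK.
  enough (H : forall s, incl s (seq 0 K) ->
    exists k, (k < K)%nat /\ fold_right (fun k acc => Rmin (f k) acc) (f O) s = f k)
    by (apply H, incl_refl).
  induction s as [|a s IH]; intros Hs; simpl; [exists O; split; [lia | reflexivity]|].
  destruct (incl_cons_inv Hs) as [Ha Hs'].
  destruct (IH Hs') as [k [Hk Ek]]. rewrite Ek.
  destruct (Rle_dec (f a) (f k)).
  - exists a. apply in_seq in Ha. split; [lia | now apply Rmin_left].
  - exists k. split; [assumption | apply Rmin_right; lra].
Qed.

Lemma minK_1 f : minK 1 f = f O.
Proof. unfold minK; simpl. apply Rmin_left; lra. Qed.

Definition is_prob K (w : nat -> R) := (forall k, (k < K)%nat -> 0 <= w k) /\ sumK K w = 1.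

Lemma ew_is_prob K L eta : (1 <= K)%nat -> is_prob K (ew K L eta).
Proof.
  intros HK. destruct eta as [e|]; unfold ew, is_prob.
  - set (Z := sumK K (fun j => exp (- e * L j))).
    assert (HZ : 0 < Z).
    { apply Rlt_le_trans with (exp (- e * L O)); [apply exp_pos|].
      apply (sumK_ge_term K (fun j => exp (- e * L j))); [intros; left; apply exp_pos | lia]. }
    split.
    + intros k _. left. apply Rdiv_lt_0_compat; [apply exp_pos | exact HZ].
    + rewrite sumK_div. fold Z. field. lra.
  - set (ind := fun j => if Req_EM_T (L j) (minK K L) then 1 else 0).
    assert (Hi : forall k, 0 <= ind k) by (intros; unfold ind; destruct Req_EM_T; lra).
    destruct (minK_attained K L HK) as [k0 [Hk0 E0]].
    assert (HZ : 1 <= sumK K ind).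
    { replace 1 with (ind k0) by (unfold ind; destruct Req_EM_T; congruence).
      apply sumK_ge_term; auto. }
    split.
    + intros k _. unfold Rdiv. apply Rmult_le_pos; [apply Hi|].
      left; apply Rinv_0_lt_compat; lra.
    + change (sumK K (fun k => ind k / sumK K ind) = 1). rewrite sumK_div. field. lra.
Qed.

Lemma hloss_bounds K w lt : is_prob K w -> (forall k, (k < K)%nat -> 0 <= lt k <= 1) ->
  0 <= hloss K w lt <= 1.
Proof.
  intros [Hw Hs] Hl. unfold hloss. split.
  - apply sumK_ge0; intros k Hk; specialize (Hw k Hk); specialize (Hl k Hk); nra.
  - rewrite <- Hs. apply sumK_le; intros k Hk; specialize (Hw k Hk); specialize (Hl k Hk); nra.
Qed.

Lemma hloss_1 w lt : sumK 1 w = 1 -> hloss 1 w lt = lt O.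
Proof.
  unfold hloss; rewrite !sumK_S, !sumK_0; intros Hw.
  replace (w O) with 1 by lra. ring.
Qed.

(* For losses in [0,1], [(l - h)^2 <= l - 2 h l + h^2] since [l^2 <= l]. *)
Lemma lvar_le K w lt : is_prob K w -> (forall k, (k < K)%nat -> 0 <= lt k <= 1) ->
  lvar K w lt (hloss K w lt) <= hloss K w lt - hloss K w lt ^ 2.
Proof.
  intros [Hw Hs] Hl. unfold lvar. set (h := hloss K w lt).
  apply Rle_trans with (sumK K (fun k => (w k * lt k + (-2 * h) * (w k * lt k)) + h ^ 2 * w k)).
  - apply sumK_le; intros k Hk; specialize (Hw k Hk); specialize (Hl k Hk).
    assert (0 <= w k * (lt k * (1 - lt k))) by (apply Rmult_le_pos; [auto | nra]). nra.
  - rewrite !sumK_plus, !sumK_scal, Hs. fold (hloss K w lt) h. lra.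
Qed.

Lemma minK_shift_bounds K L lt : (1 <= K)%nat -> (forall k, (k < K)%nat -> 0 <= lt k <= 1) ->
  0 <= minK K (fun k => L k + lt k) - minK K L <= 1.
Proof.
  intros HK Hl.
  destruct (minK_attained K L HK) as [k0 [Hk0 E0]].
  destruct (minK_attained K (fun k => L k + lt k) HK) as [k1 [Hk1 E1]].
  pose proof (minK_le K L k1 Hk1). pose proof (minK_le K (fun k => L k + lt k) k0 Hk0).
  pose proof (Hl k0 Hk0). pose proof (Hl k1 Hk1). simpl in *. lra.
Qed.

Lemma minK_shift_le_hloss_leader K L lt : (1 <= K)%nat ->
  (forall k, (k < K)%nat -> 0 <= lt k <= 1) ->
  minK K (fun k => L k + lt k) - minK K L <= hloss K (ew K L None) lt.
Proof.
  intros HK Hl. destruct (ew_is_prob K L None HK) as [Hw Hs].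
  set (inc := minK K (fun k => L k + lt k) - minK K L).
  apply Rle_trans with (sumK K (fun k => inc * ew K L None k)); [rewrite sumK_scal, Hs; lra|].
  unfold hloss. apply sumK_le. intros k Hk. specialize (Hw k Hk).
  unfold ew in *; cbv zeta in *. destruct (Req_EM_T (L k) (minK K L)) as [E|E].
  - pose proof (minK_le K (fun k => L k + lt k) k Hk). simpl in *.
    assert (inc <= lt k) by (unfold inc; lra). nra.
  - unfold Rdiv; lra.
Qed.

(* Jensen: [exp (-e h) <= sum_k w_k exp (-e lt_k)]. *)
Lemma mixloss_le_hloss K w lt e a b : is_prob K w ->
  (forall k, (k < K)%nat -> 0 <= lt k <= 1) -> 0 <= e ->
  mixloss K w lt (Some e) a b <= hloss K w lt.
Proof.
  intros Hprob Hl He. pose proof (hloss_bounds K w lt Hprob Hl) as Hh.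
  destruct Hprob as [Hw Hs]. unfold mixloss. set (h := hloss K w lt) in *.
  destruct (Req_dec e 0) as [->|He0].
  (* At [e = 0] the junk value [1 / 0] multiplies [ln 1 = 0]. *)
  { rewrite (sumK_ext K _ w) by (intros; rewrite Ropp_0, Rmult_0_l, exp_0; ring).
    rewrite Hs, ln_1. lra. }
  assert (J : exp (- e * h) <= sumK K (fun k => w k * exp (- e * lt k))).
  { apply Rle_trans with (sumK K (fun k => exp (- e * h) * w k
        + (- e * exp (- e * h)) * (w k * lt k) + (e * exp (- e * h) * h) * w k)).
    - rewrite !sumK_plus, !sumK_scal, Hs. fold (hloss K w lt) h. lra.
    - apply sumK_le. intros k Hk. specialize (Hw k Hk).
      replace (- e * lt k) with (- e * h + (- e * (lt k - h))) by ring. rewrite exp_plus.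
      pose proof (exp_ineq1_le (- e * (lt k - h))). pose proof (exp_pos (- e * h)).
      assert (0 <= (w k * exp (- e * h)) * (exp (- e * (lt k - h)) - (1 + - e * (lt k - h))))
        by (apply Rmult_le_pos; [apply Rmult_le_pos |]; lra).
      nra. }
  apply ln_le in J; [| apply exp_pos]. rewrite ln_exp in J.
  assert (0 < 1 / e) by (apply Rdiv_lt_0_compat; lra).
  apply Rle_trans with (- (1 / e) * (- e * h)); [nra | right; field; lra].
Qed.

Lemma mixloss_ew_le_hloss K L lt eta : (1 <= K)%nat ->
  (forall k, (k < K)%nat -> 0 <= lt k <= 1) -> (forall e, eta = Some e -> 0 <= e) ->
  mixloss K (ew K L eta) lt eta (minK K L) (minK K (fun k => L k + lt k))
    <= hloss K (ew K L eta) lt.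
Proof.
  intros HK Hl He. destruct eta as [e|].
  - apply mixloss_le_hloss; auto using ew_is_prob.
  - apply minK_shift_le_hloss_leader; auto.
Qed.

Definition lse K e (L : nat -> R) := - (1 / e) * ln (sumK K (fun k => exp (- e * L k))).

Lemma sumK_exp_pos K e L : (1 <= K)%nat -> 0 < sumK K (fun k => exp (- e * L k)).
Proof.
  intros HK. apply Rlt_le_trans with (exp (- e * L O)); [apply exp_pos|].
  apply (sumK_ge_term K (fun k => exp (- e * L k))); [intros; left; apply exp_pos | lia].
Qed.

Lemma mixloss_ew_lse K L lt e a b : (1 <= K)%nat ->
  mixloss K (ew K L (Some e)) lt (Some e) a b = lse K e (fun k => L k + lt k) - lse K e L.
Proof.
  intros HK. unfold mixloss, lse, ew.
  pose proof (sumK_exp_pos K e L HK). pose proof (sumK_exp_pos K e (fun k => L k + lt k) HK).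
  rewrite (sumK_ext K _ (fun k => exp (- e * (L k + lt k)) / sumK K (fun j => exp (- e * L j)))).
  - rewrite sumK_div, ln_div by assumption. ring.
  - intros k _. rewrite Rmult_plus_distr_l, exp_plus. field. lra.
Qed.

(* [exp (-e min L) <= Z <= K exp (-e min L)] for the partition function [Z]. *)
Lemma lse_sub_minK_bounds K e L : (1 <= K)%nat -> 0 < e ->
  - ln (INR K) / e <= lse K e L - minK K L <= 0.
Proof.
  intros HK He. unfold lse. set (mn := minK K L).
  set (Z := sumK K (fun k => exp (- e * L k))).
  destruct (minK_attained K L HK) as [k0 [Hk0 E0]]. fold mn in E0.
  assert (Z1 : exp (- e * mn) <= Z).
  { rewrite E0. apply (sumK_ge_term K (fun k => exp (- e * L k))); auto.
    intros; left; apply exp_pos. }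
  assert (Z2 : Z <= INR K * exp (- e * mn)).
  { rewrite <- sumK_const. apply sumK_le. intros k Hk. apply exp_le.
    pose proof (minK_le K L k Hk) as Hm. fold mn in Hm. nra. }
  assert (HKpos : 0 < INR K) by (apply lt_0_INR; lia).
  assert (l1 : - e * mn <= ln Z) by (rewrite <- (ln_exp (- e * mn)); apply ln_le; auto; apply exp_pos).
  assert (l2 : ln Z <= ln (INR K) + - e * mn).
  { rewrite <- (ln_exp (- e * mn)), <- ln_mult by (auto; apply exp_pos).
    apply ln_le; auto. apply sumK_exp_pos; auto. }
  assert (Hinv : 0 < 1 / e) by (apply Rdiv_lt_0_compat; lra).
  replace (- ln (INR K) / e) with (- (1 / e) * (ln (INR K) + - e * mn) - mn) by (field; lra).
  replace 0 with (- (1 / e) * (- e * mn) - mn) by (field; lra).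
  assert ((1 / e) * ln Z <= (1 / e) * (ln (INR K) + - e * mn)) by (apply Rmult_le_compat_l; lra).
  assert ((1 / e) * (- e * mn) <= (1 / e) * ln Z) by (apply Rmult_le_compat_l; lra).
  lra.
Qed.

(* Convexity of [exp] applied with exponent [e'/e] (a power-mean inequality). *)
Lemma lse_sub_lse_le K e e' L : (1 <= K)%nat -> 0 < e' <= e ->
  lse K e L - lse K e' L <= ln (INR K) * (1 / e' - 1 / e).
Proof.
  intros HK He. unfold lse.
  assert (HKpos : 0 < INR K) by (apply lt_0_INR; lia).
  pose proof (sumK_exp_pos K e L HK) as HZ. pose proof (sumK_exp_pos K e' L HK) as HZ'.
  set (s := e' / e). assert (Hs : 0 < s <= 1).
  { unfold s; split; [apply Rdiv_lt_0_compat; lra|].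
    apply Rmult_le_reg_r with e; [lra|]. unfold Rdiv; rewrite Rmult_assoc, Rinv_l; lra. }
  set (Z := sumK K (fun k => exp (- e * L k))) in *.
  set (Z' := sumK K (fun k => exp (- e' * L k))) in *.
  set (c := ln (Z / INR K)).
  assert (Ec : exp (- c) = INR K / Z).
  { unfold c. rewrite exp_Ropp, exp_ln by (apply Rdiv_lt_0_compat; lra). field; lra. }
  assert (B : Z' <= exp (s * c) * INR K).
  { apply Rle_trans with (sumK K (fun k =>
        (exp (s * c) * s * exp (- c)) * exp (- e * L k) + (exp (s * c) * (1 - s)))).
    - apply sumK_le. intros k _.
      replace (- e' * L k) with (s * c + s * (- e * L k - c)) by (unfold s; field; lra).
      rewrite exp_plus. pose proof (exp_convex s (- e * L k - c) ltac:(lra)) as Hc.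
      replace (exp (- e * L k - c)) with (exp (- e * L k) * exp (- c)) in Hc
        by (rewrite <- exp_plus; f_equal; ring).
      pose proof (exp_pos (s * c)). nra.
    - rewrite sumK_plus, sumK_scal, sumK_const. fold Z. rewrite Ec. right; field. lra. }
  assert (lB : ln Z' <= s * c + ln (INR K)).
  { rewrite <- (ln_exp (s * c)), <- ln_mult by (auto; apply exp_pos). apply ln_le; auto. }
  unfold c in lB. rewrite ln_div in lB by lra.
  assert (0 < 1 / e') by (apply Rdiv_lt_0_compat; lra).
  assert ((1 / e') * ln Z' <= (1 / e') * (s * (ln Z - ln (INR K)) + ln (INR K)))
    by (apply Rmult_le_compat_l; lra).
  apply Rle_trans with (- (1 / e) * ln Z + (1 / e') * (s * (ln Z - ln (INR K)) + ln (INR K)));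
    [lra | right; unfold s; field; lra].
Qed.

Lemma lse_le_lse K e e' L : (1 <= K)%nat -> 0 < e' <= e -> lse K e' L <= lse K e L.
Proof.
  intros HK He. unfold lse. set (mn := minK K L).
  destruct (minK_attained K L HK) as [k0 [Hk0 E0]]. fold mn in E0.
  set (S := fun a => sumK K (fun k => exp (- a * (L k - mn)))).
  assert (EZ : forall a, sumK K (fun k => exp (- a * L k)) = exp (- a * mn) * S a).
  { intros a. unfold S. rewrite <- sumK_scal. apply sumK_ext. intros.
    rewrite <- exp_plus. f_equal; ring. }
  assert (S1 : forall a, 1 <= S a).
  { intros a. unfold S.
    replace 1 with (exp (- a * (L k0 - mn)))
      by (rewrite E0, Rminus_diag, Rmult_0_r; apply exp_0).
    apply (sumK_ge_term K (fun k => exp (- a * (L k - mn)))); auto.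
    intros; left; apply exp_pos. }
  assert (S2 : S e <= S e').
  { unfold S. apply sumK_le. intros k Hk. apply exp_le.
    pose proof (minK_le K L k Hk) as Hm. fold mn in Hm. nra. }
  assert (EL : forall a, ln (sumK K (fun k => exp (- a * L k))) = - a * mn + ln (S a)).
  { intros a. rewrite EZ, ln_mult, ln_exp; [reflexivity | apply exp_pos |].
    specialize (S1 a); lra. }
  rewrite !EL.
  assert (l0 : 0 <= ln (S e)) by (rewrite <- ln_1; apply ln_le; [lra | auto]).
  assert (l1 : ln (S e) <= ln (S e')) by (apply ln_le; auto; specialize (S1 e); lra).
  assert (Hi : 1 / e <= 1 / e').
  { unfold Rdiv. rewrite !Rmult_1_l. apply Rinv_le_contravar; lra. }
  assert (0 < 1 / e) by (apply Rdiv_lt_0_compat; lra).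
  assert ((1 / e) * ln (S e) <= (1 / e') * ln (S e')).
  { apply Rle_trans with ((1 / e) * ln (S e')); [apply Rmult_le_compat_l | apply Rmult_le_compat_r]; lra. }
  apply Rle_trans with (mn - (1 / e') * ln (S e')); [right; field; lra|].
  apply Rle_trans with (mn - (1 / e) * ln (S e)); [lra | right; field; lra].
Qed.

(* The learning rate of a flop round is [ln K / D]; the gap is the regret of that rate's
   potential against the leader (taken [0] at [D = 0], when the rate is infinite). *)
Definition flop_gap K D L :=
  if Req_EM_T D 0 then 0 else lse K (ln (INR K) / D) L - minK K L.

Lemma ln_INR_pos K : (2 <= K)%nat -> 0 < ln (INR K).
Proof. intros HK. rewrite <- ln_1. apply ln_increasing; [lra|]. apply (lt_INR 1); lia. Qed.

Lemma flop_rate_le K D D' : (2 <= K)%nat -> 0 < D <= D' ->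
  0 < ln (INR K) / D' <= ln (INR K) / D.
Proof.
  intros HK HD. pose proof (ln_INR_pos K HK). split; [apply Rdiv_lt_0_compat; lra|].
  unfold Rdiv. apply Rmult_le_compat_l; [lra | apply Rinv_le_contravar; lra].
Qed.

Lemma flop_gap_bounds K D L : (2 <= K)%nat -> 0 <= D -> - D <= flop_gap K D L <= 0.
Proof.
  intros HK HD. unfold flop_gap. destruct Req_EM_T as [|HD0]; [lra|].
  destruct (flop_rate_le K D D HK ltac:(lra)) as [He _].
  pose proof (lse_sub_minK_bounds K (ln (INR K) / D) L ltac:(lia) He) as Hb.
  replace (- ln (INR K) / (ln (INR K) / D)) with (- D) in Hb
    by (pose proof (ln_INR_pos K HK); field; lra).
  exact Hb.
Qed.

Lemma flop_gap_antitone K D D' L : (2 <= K)%nat -> 0 <= D <= D' ->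
  flop_gap K D' L <= flop_gap K D L.
Proof.
  intros HK HD. pose proof (flop_gap_bounds K D' L HK ltac:(lra)).
  unfold flop_gap in *. destruct (Req_EM_T D' 0); destruct (Req_EM_T D 0); try lra.
  pose proof (flop_rate_le K D D' HK ltac:(lra)).
  pose proof (lse_le_lse K (ln (INR K) / D) (ln (INR K) / D') L ltac:(lia) ltac:(lra)).
  lra.
Qed.

Lemma flop_gap_add_monotone K D D' L : (2 <= K)%nat -> 0 <= D <= D' ->
  D + flop_gap K D L <= D' + flop_gap K D' L.
Proof.
  intros HK HD. pose proof (flop_gap_bounds K D L HK ltac:(lra)).
  pose proof (flop_gap_bounds K D' L HK ltac:(lra)).
  unfold flop_gap in *. destruct (Req_EM_T D' 0); destruct (Req_EM_T D 0); try lra.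
  pose proof (flop_rate_le K D D' HK ltac:(lra)).
  pose proof (lse_sub_lse_le K (ln (INR K) / D) (ln (INR K) / D') L ltac:(lia) ltac:(lra)) as Hp.
  replace (ln (INR K) * (1 / (ln (INR K) / D') - 1 / (ln (INR K) / D))) with (D' - D) in Hp
    by (pose proof (ln_INR_pos K HK); field; lra).
  lra.
Qed.

Lemma mixloss_flop K D L lt : (1 <= K)%nat ->
  let eta := if Req_EM_T D 0 then None else Some (ln (INR K) / D) in
  let L' := fun k => L k + lt k in
  mixloss K (ew K L eta) lt eta (minK K L) (minK K L') - (minK K L' - minK K L)
  = flop_gap K D L' - flop_gap K D L.
Proof.
  intros HK eta L'. unfold eta, L', flop_gap. destruct Req_EM_T.
  - unfold mixloss; ring.
  - rewrite mixloss_ew_lse by assumption. ring.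
Qed.

Lemma mul_compl_lipschitz n x A E : 0 <= x <= n -> 0 <= A <= n -> Rabs (x - A) <= E ->
  x * (n - x) <= A * (n - A) + n * E.
Proof.
  intros Hx HA HE.
  assert (Rabs (n - x - A) <= n) by (apply Rabs_le; lra).
  assert (Rabs ((x - A) * (n - x - A)) <= E * n)
    by (rewrite Rabs_mult; apply Rmult_le_compat; auto; apply Rabs_pos).
  pose proof (Rle_abs ((x - A) * (n - x - A))). nra.
Qed.

Lemma mul_compl_extend T n A B : 0 <= n <= T -> 0 <= A <= n -> 0 <= B <= T - n ->
  T * (A * (n - A)) <= n * ((A + B) * (T - (A + B))).
Proof.
  intros Hn HA HB.
  enough (0 <= n * ((A + B) * (T - (A + B))) - T * (A * (n - A))) by lra.
  replace (n * ((A + B) * (T - (A + B))) - T * (A * (n - A)))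
    with (n * B * ((T - n) - B) + (A * A * (T - n) + n * B * (n - 2 * A))) by ring.
  assert (0 <= n * B * ((T - n) - B)) by (apply Rmult_le_pos; [apply Rmult_le_pos|]; lra).
  enough (0 <= A * A * (T - n) + n * B * (n - 2 * A)) by lra.
  destruct (Rle_lt_dec (2 * A) n).
  - assert (0 <= A * A * (T - n)) by (apply Rmult_le_pos; [nra | lra]).
    assert (0 <= n * B * (n - 2 * A)) by (apply Rmult_le_pos; [apply Rmult_le_pos|]; lra).
    lra.
  - assert (0 <= n * (T - n - B) * (2 * A - n)) by (apply Rmult_le_pos; [apply Rmult_le_pos|]; lra).
    assert (0 <= (T - n) * ((n - A) * (n - A))) by (apply Rmult_le_pos; [lra | nra]).
    nra.
Qed.

Lemma weighted_variance_bound T (c h a v : nat -> R) E : (1 <= T)%nat ->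
  (forall s, (s < T)%nat -> 0 <= c s <= 1 /\ 0 <= h s <= 1 /\ 0 <= a s <= 1 /\ v s <= h s - h s ^ 2) ->
  Rabs (sumK T (fun s => c s * h s) - sumK T (fun s => c s * a s)) <= E ->
  sumK T (fun s => c s * v s) <= sumK T a * (INR T - sumK T a) / INR T + E.
Proof.
  intros HT Hs HE.
  set (n := sumK T c). set (x := sumK T (fun s => c s * h s)) in HE.
  set (A := sumK T (fun s => c s * a s)) in HE. set (q := sumK T (fun s => c s * h s ^ 2)).
  set (V := sumK T (fun s => c s * v s)). set (L := sumK T a) in *.
  assert (HV : V <= x - q).
  { unfold V, x, q. rewrite <- sumK_minus.
    apply sumK_le; intros s Hs'; destruct (Hs s Hs') as (Hc & _ & _ & Hv); nra. }
  assert (HCS : x ^ 2 <= n * q) by (apply sumK_cauchy_schwarz; intros s Hs'; apply Hs; auto).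
  assert (Hq : 0 <= q).
  { apply sumK_ge0; intros s Hs'; destruct (Hs s Hs') as (Hc & _).
    apply Rmult_le_pos; [lra | apply pow2_ge_0]. }
  assert (Hx : 0 <= x <= n).
  { split; [apply sumK_ge0 | apply sumK_le]; intros s Hs'; destruct (Hs s Hs') as (Hc & Hh & _); nra. }
  assert (HA : 0 <= A <= n).
  { split; [apply sumK_ge0 | apply sumK_le]; intros s Hs'; destruct (Hs s Hs') as (Hc & _ & Ha & _); nra. }
  assert (HB : 0 <= L - A <= INR T - n).
  { replace (L - A) with (sumK T (fun s => a s - c s * a s)) by apply sumK_minus.
    replace (INR T - n) with (sumK T (fun s => 1 - c s)) by (unfold n; rewrite sumK_minus, sumK_const; ring).
    split; [apply sumK_ge0 | apply sumK_le]; intros s Hs'; destruct (Hs s Hs') as (Hc & _ & Ha & _); nra. }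
  assert (HTpos : 0 < INR T) by (apply lt_0_INR; lia).
  assert (HE0 : 0 <= E) by (pose proof (Rabs_pos (x - A)); lra).
  enough (INR T * V <= L * (INR T - L) + INR T * E).
  { apply Rmult_le_reg_l with (INR T); [exact HTpos|].
    replace (INR T * (L * (INR T - L) / INR T + E)) with (L * (INR T - L) + INR T * E)
      by (field; lra). exact H. }
  destruct (Req_dec n 0) as [Hn0|Hn0].
  - assert (0 <= L * (INR T - L)) by (apply Rmult_le_pos; lra). nra.
  - assert (HnV : n * V <= x * (n - x)) by nra.
    pose proof (mul_compl_lipschitz n x A E Hx HA HE) as Hlip.
    pose proof (mul_compl_extend (INR T) n A (L - A) ltac:(lra) HA HB) as Hext.
    replace (A + (L - A)) with L in Hext by ring.
    apply Rmult_le_reg_l with n; [lra|].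
    apply Rle_trans with (INR T * (x * (n - x))); [nra|].
    apply Rle_trans with (INR T * (A * (n - A) + n * E)); [apply Rmult_le_compat_l; lra | nra].
Qed.

Lemma geometric_tail_le phi b D : 1 < phi -> 0 <= b -> phi * b <= D ->
  phi / (phi - 1) * b + D <= phi / (phi - 1) * D.
Proof.
  intros Hphi Hb HD. apply Rmult_le_reg_r with (phi - 1); [lra|].
  replace ((phi / (phi - 1) * b + D) * (phi - 1)) with (phi * b + D * (phi - 1)) by (field; lra).
  replace (phi / (phi - 1) * D * (phi - 1)) with (phi * D) by (field; lra). lra.
Qed.

Section FlipFlop.

Variables (K T : nat) (phi alpha : R) (l : nat -> nat -> R).
Hypothesis HK : (1 <= K)%nat.
Hypothesis Hl : forall t k, (1 <= t <= T)%nat -> (k < K)%nat -> 0 <= l t k <= 1.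

Local Notation st s := (ffstate K phi alpha l s).

(* Quantities of round [s + 1], computed from the state after round [s]. *)
Definition ff_w s := ew K (cumL l s) (ff_eta K (st s)).
Definition ff_h s := hloss K (ff_w s) (l (S s)).
Definition ff_m s :=
  mixloss K (ff_w s) (l (S s)) (ff_eta K (st s)) (Lstar K l s) (Lstar K l (S s)).
Definition ff_v s := lvar K (ff_w s) (l (S s)) (ff_h s).
Definition ff_flop s := if inflip (st s) then 0 else 1.
Definition Lstar_inc s := Lstar K l (S s) - Lstar K l s.

Lemma ffstate_S_flip s : inflip (st s) = true ->
  st (S s) = mkst
    (if Rlt_dec (phi / alpha * Dflop (st s)) (Dflip (st s) + (ff_h s - ff_m s)) then false else true)
    (Dflip (st s) + (ff_h s - ff_m s)) (Dflop (st s)) (Hff (st s) + ff_h s) (Vflop (st s)).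
Proof. intros H. cbn [ffstate]. rewrite H. reflexivity. Qed.

Lemma ffstate_S_flop s : inflip (st s) = false ->
  st (S s) = mkst
    (if Rlt_dec (alpha * Dflip (st s)) (Dflop (st s) + (ff_h s - ff_m s)) then true else false)
    (Dflip (st s)) (Dflop (st s) + (ff_h s - ff_m s)) (Hff (st s) + ff_h s)
    (Vflop (st s) + ff_v s).
Proof. intros H. cbn [ffstate]. rewrite H. reflexivity. Qed.

Lemma Dflop_S s : Dflop (st (S s)) = Dflop (st s) + ff_flop s * (ff_h s - ff_m s).
Proof.
  unfold ff_flop. destruct (inflip (st s)) eqn:E;
    [rewrite ffstate_S_flip | rewrite ffstate_S_flop]; simpl; auto; ring.
Qed.

Lemma Vflop_S s : Vflop (st (S s)) = Vflop (st s) + ff_flop s * ff_v s.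
Proof.
  unfold ff_flop. destruct (inflip (st s)) eqn:E;
    [rewrite ffstate_S_flip | rewrite ffstate_S_flop]; simpl; auto; ring.
Qed.

Lemma Dflop_sum n : Dflop (st n) = sumK n (fun s => ff_flop s * (ff_h s - ff_m s)).
Proof. induction n; [reflexivity|]. rewrite Dflop_S, sumK_S, IHn. reflexivity. Qed.

Lemma Vflop_sum n : Vflop (st n) = sumK n (fun s => ff_flop s * ff_v s).
Proof. induction n; [reflexivity|]. rewrite Vflop_S, sumK_S, IHn. reflexivity. Qed.

Lemma Lstar_sum n : Lstar K l n = sumK n Lstar_inc.
Proof.
  unfold Lstar_inc. rewrite sumK_telescope. enough (Lstar K l O = 0) by lra.
  destruct (minK_attained K (cumL l O) HK) as [k [_ E]]. unfold Lstar. rewrite E. reflexivity.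
Qed.

Lemma round_bounded s : (s < T)%nat -> forall k, (k < K)%nat -> 0 <= l (S s) k <= 1.
Proof. intros Hs k Hk. apply Hl; [lia | exact Hk]. Qed.

Lemma ff_w_is_prob s : is_prob K (ff_w s).
Proof. apply ew_is_prob, HK. Qed.

Lemma ff_h_bounds s : (s < T)%nat -> 0 <= ff_h s <= 1.
Proof. intros Hs. apply hloss_bounds; [apply ff_w_is_prob | apply round_bounded, Hs]. Qed.

Lemma ff_v_le s : (s < T)%nat -> ff_v s <= ff_h s - ff_h s ^ 2.
Proof. intros Hs. apply lvar_le; [apply ff_w_is_prob | apply round_bounded, Hs]. Qed.

Lemma Lstar_inc_bounds s : (s < T)%nat -> 0 <= Lstar_inc s <= 1.
Proof. intros Hs. apply (minK_shift_bounds K (cumL l s)); [exact HK | apply round_bounded, Hs]. Qed.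

Lemma ff_m_le_h s : (s < T)%nat -> 0 <= Dflop (st s) -> ff_m s <= ff_h s.
Proof.
  intros Hs HD. apply (mixloss_ew_le_hloss K (cumL l s)); [exact HK | apply round_bounded, Hs|].
  intros e. unfold ff_eta. destruct (inflip (st s)); [discriminate|].
  destruct Req_EM_T; [discriminate|]. intros [= <-].
  unfold Rdiv. apply Rmult_le_pos; [| apply Rlt_le, Rinv_0_lt_compat; lra].
  rewrite <- ln_1. apply ln_le; [lra|]. apply (le_INR 1), HK.
Qed.

Lemma Dflop_ge0 s : (s <= T)%nat -> 0 <= Dflop (st s).
Proof.
  induction s as [|s IH]; intros Hs; [simpl; lra|].
  rewrite Dflop_S. pose proof (ff_m_le_h s ltac:(lia) (IH ltac:(lia))).
  unfold ff_flop. pose proof (IH ltac:(lia)). destruct (inflip (st s)); nra.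
Qed.

Section Regret.

Hypothesis HK2 : (2 <= K)%nat.
Hypothesis Hphi : 1 < phi.
Hypothesis Halpha : 0 < alpha.

Definition ff_U s := sumK s (fun r => ff_flop r * (ff_m r - Lstar_inc r)).

(* During a flop phase, [b] is the flop accumulator at the start of the phase; the phase
   condition [phi b <= alpha Dflip] makes the starting values grow geometrically. *)
Definition regret_inv s : Prop :=
  let D := Dflop (st s) in
  if inflip (st s) then Rabs (ff_U s) <= phi / (phi - 1) * D
  else exists b, 0 <= b <= D /\ phi * b <= alpha * Dflip (st s) /\
    - (phi / (phi - 1)) * b <= ff_U s - flop_gap K D (cumL l s) <= phi / (phi - 1) * b + D.

Lemma ff_U_S s : ff_U (S s) = ff_U s + ff_flop s * (ff_m s - Lstar_inc s).
Proof. apply sumK_S. Qed.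

Lemma ff_m_sub_Lstar_inc_flop s : inflip (st s) = false ->
  ff_m s - Lstar_inc s =
  flop_gap K (Dflop (st s)) (cumL l (S s)) - flop_gap K (Dflop (st s)) (cumL l s).
Proof.
  intros Hf. unfold ff_m, ff_w, Lstar_inc, Lstar, ff_eta. rewrite Hf.
  exact (mixloss_flop K (Dflop (st s)) (cumL l s) (l (S s)) HK).
Qed.

Lemma regret_inv_S_flip s : (s < T)%nat -> inflip (st s) = true ->
  regret_inv s -> regret_inv (S s).
Proof.
  intros Hs Hf Hinv. unfold regret_inv in *; cbv zeta in *. rewrite Hf in Hinv.
  rewrite ff_U_S. unfold ff_flop. rewrite Hf, Rmult_0_l, Rplus_0_r.
  rewrite ffstate_S_flip by exact Hf. cbn [inflip Dflop Dflip].
  pose proof (Dflop_ge0 s ltac:(lia)) as HD.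
  destruct Rlt_dec as [Hswitch|]; [|exact Hinv].
  exists (Dflop (st s)). apply Rabs_le_inv in Hinv.
  pose proof (flop_gap_bounds K (Dflop (st s)) (cumL l (S s)) HK2 HD).
  split; [lra|]. split; [|lra].
  apply Rmult_le_reg_l with (/ alpha); [apply Rinv_0_lt_compat, Halpha|].
  replace (/ alpha * (phi * Dflop (st s))) with (phi / alpha * Dflop (st s)) by (field; lra).
  replace (/ alpha * (alpha * _)) with (Dflip (st s) + (ff_h s - ff_m s)) by (field; lra).
  lra.
Qed.

Lemma regret_inv_S_flop s : (s < T)%nat -> inflip (st s) = false ->
  regret_inv s -> regret_inv (S s).
Proof.
  intros Hs Hf Hinv. unfold regret_inv in *; cbv zeta in *. rewrite Hf in Hinv.
  destruct Hinv as (b & Hb & Hb_phase & HW).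
  rewrite ff_U_S, ff_m_sub_Lstar_inc_flop by exact Hf. unfold ff_flop. rewrite Hf, Rmult_1_l.
  rewrite ffstate_S_flop by exact Hf. cbn [inflip Dflop Dflip].
  set (D := Dflop (st s)) in *. set (L' := cumL l (S s)).
  pose proof (Dflop_ge0 s ltac:(lia)) as HD. fold D in HD.
  pose proof (ff_m_le_h s Hs HD) as Hgap.
  set (D' := D + (ff_h s - ff_m s)).
  pose proof (flop_gap_antitone K D D' L' HK2 ltac:(unfold D'; lra)).
  pose proof (flop_gap_add_monotone K D D' L' HK2 ltac:(unfold D'; lra)).
  pose proof (flop_gap_bounds K D' L' HK2 ltac:(unfold D'; lra)).
  assert (Hc1 : 0 <= phi / (phi - 1) * b)
    by (apply Rmult_le_pos; [apply Rlt_le, Rdiv_lt_0_compat |]; lra).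
  destruct Rlt_dec as [Hswitch|].
  - pose proof (geometric_tail_le phi b D' Hphi ltac:(lra) ltac:(lra)).
    apply Rabs_le. lra.
  - exists b. split; [unfold D'; lra|]. split; [exact Hb_phase | lra].
Qed.

Lemma regret_inv_all s : (s <= T)%nat -> regret_inv s.
Proof.
  induction s as [|s IH]; intros Hs.
  - unfold regret_inv; simpl. unfold ff_U. rewrite sumK_0, Rabs_R0. lra.
  - destruct (inflip (st s)) eqn:Hf;
      [apply regret_inv_S_flip | apply regret_inv_S_flop];
      solve [exact Hf | lia | apply IH; lia].
Qed.

Lemma flop_regret_bound : Rabs (ff_U T) <= (phi / (phi - 1) + 1) * Dflop (st T).
Proof.
  pose proof (regret_inv_all T (le_n T)) as Hinv. unfold regret_inv in Hinv; cbv zeta in Hinv.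
  pose proof (Dflop_ge0 T (le_n T)) as HD.
  assert (Hc1 : 0 < phi / (phi - 1)) by (apply Rdiv_lt_0_compat; lra).
  destruct (inflip (st T)).
  - assert (0 <= Dflop (st T)) by exact HD. nra.
  - destruct Hinv as (b & Hb & _ & HW).
    pose proof (flop_gap_bounds K (Dflop (st T)) (cumL l T) HK2 HD).
    assert (phi / (phi - 1) * b <= phi / (phi - 1) * Dflop (st T)) by (apply Rmult_le_compat_l; lra).
    apply Rabs_le. nra.
Qed.

End Regret.

Lemma flop_excess :
  sumK T (fun s => ff_flop s * ff_h s) - sumK T (fun s => ff_flop s * Lstar_inc s)
  = Dflop (st T) + ff_U T.
Proof.
  rewrite Dflop_sum. unfold ff_U. rewrite <- !sumK_minus, <- sumK_plus.
  apply sumK_ext. intros; ring.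
Qed.

End FlipFlop.

Lemma ff_h_single phi alpha l s : ff_h 1 phi alpha l s = Lstar_inc 1 l s.
Proof.
  unfold ff_h, Lstar_inc, Lstar. rewrite hloss_1 by apply (ew_is_prob 1), le_n.
  rewrite !minK_1. simpl. ring.
Qed.

Theorem lemma13 (K T : nat) (l : nat -> nat -> R) (phi alpha : R) :
  (1 <= K)%nat -> (1 <= T)%nat ->
  (forall t k, (1 <= t <= T)%nat -> (k < K)%nat -> 0 <= l t k <= 1) ->
  1 < phi -> 0 < alpha ->
  Hff (ffstate K phi alpha l T) >= Lstar K l T ->
  Vflop (ffstate K phi alpha l T) <=
    Lstar K l T * (INR T - Lstar K l T) / INR T
    + (phi / (phi - 1) + phi / alpha + 2) * Dflop (ffstate K phi alpha l T)
    + phi / alpha.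
Proof.
  intros HK HT Hl Hphi Halpha _.
  pose proof (Dflop_ge0 K T phi alpha l HK Hl T (le_n T)) as HD.
  set (D := Dflop (ffstate K phi alpha l T)) in *.
  assert (Hexcess : Rabs (sumK T (fun s => ff_flop K phi alpha l s * ff_h K phi alpha l s)
      - sumK T (fun s => ff_flop K phi alpha l s * Lstar_inc K l s)) <= (phi / (phi - 1) + 2) * D).
  { assert (0 < phi / (phi - 1)) by (apply Rdiv_lt_0_compat; lra).
    destruct (Nat.eq_dec K 1) as [->|HK1].
    - rewrite (sumK_ext T _ (fun s => ff_flop 1 phi alpha l s * Lstar_inc 1 l s))
        by (intros; rewrite ff_h_single; reflexivity).
      rewrite Rminus_diag, Rabs_R0. nra.
    - rewrite flop_excess. fold D.
      pose proof (flop_regret_bound K T phi alpha l HK Hl ltac:(lia) Hphi Halpha) as Hreg.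
      fold D in Hreg.
      eapply Rle_trans; [apply Rabs_triang|]. rewrite Rabs_pos_eq by exact HD. lra. }
  rewrite Vflop_sum, Lstar_sum by exact HK.
  set (L := sumK T (Lstar_inc K l)).
  apply Rle_trans with (L * (INR T - L) / INR T + (phi / (phi - 1) + 2) * D).
  - apply (weighted_variance_bound T _ (ff_h K phi alpha l)); [exact HT | | exact Hexcess].
    intros s Hs. repeat split;
      solve [unfold ff_flop; destruct inflip; lra | now apply ff_h_bounds with T
            | now apply Lstar_inc_bounds with T | now apply ff_v_le with T].
  - assert (0 < phi / alpha) by (apply Rdiv_lt_0_compat; lra). nra.
Qed.
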